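(* Let $A$ be a wqo with $\mathbf{w}(A)=\alpha+n$ where $\alpha$ is an ordinal and $0\le n<\omega$. Then there exists a wqo $B$ with $\mathbf{w}(B)=\alpha$ such that $B\sqcup\Gamma_n$ is isomorphic to a substructure of $A$.
   Context: A wqo is a quasi-order in which every infinite sequence $x_0,x_1,\dots$ has $i<j$ with $x_i\le x_j$. $\mathbf{w}(A)$ (width) is the rank of the root of the well-founded tree of finite sequences of pairwise incomparable elements of $A$ (root: empty sequence, children: one-element extensions; rank $r(s)=\sup\{r(t)+1: t \text{ child of } s\}$). $\Gamma_n$ is an $n$-element antichain. $B\sqcup C$ is the disjoint union with ordering $\le_B\cup\le_C$. A substructure of $A$ is a subset of $A$ with the restricted ordering. *)

From Stdlib Require Import List Fin.
Import ListNotations.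

Definition qo {A : Type} (le : A -> A -> Prop) : Prop :=
  (forall x, le x x) /\ (forall x y z, le x y -> le y z -> le x z).

Definition wqo {A : Type} (le : A -> A -> Prop) : Prop :=
  qo le /\ forall f : nat -> A, exists i j, i < j /\ le (f i) (f j).

Definition incomp {A : Type} (le : A -> A -> Prop) (x y : A) : Prop :=
  ~ le x y /\ ~ le y x.

(* children in the tree of finite sequences of pairwise incomparable
   elements: one-element extensions keeping pairwise incomparability *)
Definition child {A : Type} (le : A -> A -> Prop) (s t : list A) : Prop :=
  exists x, t = s ++ [x] /\ Forall (incomp le x) s.

(* ordinals as (arbitrary-branching) well-founded trees; the ordinal
   denoted by Node J f is sup_i (f i + 1) *)
Inductive ord : Type :=
  | Node : forall J : Type, (J -> ord) -> ord.

Definition osucc (a : ord) : ord := Node unit (fun _ => a).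
Definition oadd_nat (a : ord) (n : nat) : ord := Nat.iter n osucc a.

(* rank(a) <= rank_T(s), for s a node of a tree given by a child relation *)
Fixpoint ord_le_tree (a : ord) {T : Type} (ch : T -> T -> Prop) (s : T) : Prop :=
  match a with
  | Node J f => forall i, exists t, ch s t /\ ord_le_tree (f i) ch t
  end.

(* rank_T(s) <= rank(a) *)
Inductive tree_le_ord {T : Type} (ch : T -> T -> Prop) : T -> ord -> Prop :=
  | tlo : forall s J (f : J -> ord),
      (forall t, ch s t -> exists i, tree_le_ord ch t (f i)) ->
      tree_le_ord ch s (Node J f).

(* w(A) = alpha : rank of the root [] of the antichain-sequence tree *)
Definition width_is {A : Type} (le : A -> A -> Prop) (alpha : ord) : Prop :=
  tree_le_ord (child le) [] alpha /\ ord_le_tree alpha (child le) [].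

(* ordering of B ⊔ Γ_n, Γ_n the n-element antichain Fin.t n *)
Definition sum_le {B : Type} (leB : B -> B -> Prop) (n : nat)
  (x y : B + Fin.t n) : Prop :=
  match x, y with
  | inl a, inl b => leB a b
  | inr i, inr j => i = j
  | _, _ => False
  end.

(* If w(A) = g + 1, the root of the antichain tree has a child [x] of rank
   exactly g.  The subtree below [x] is the antichain tree of the suborder A_x
   of elements incomparable with x, so w(A_x) = g.  Peeling off n such points
   one at a time, each incomparable with all later ones, yields B ⊔ Γ_n. *)
From Stdlib Require Import List Fin ProofIrrelevance.
Import ListNotations.

Lemma tree_le_ord_Node_inv {T : Type} (ch : T -> T -> Prop) s J (f : J -> ord) :
  tree_le_ord ch s (Node J f) ->
  forall t, ch s t -> exists i, tree_le_ord ch t (f i).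
Proof.
  intro H.
  change (match Node J f with
          | Node J f => forall t, ch s t -> exists i, tree_le_ord ch t (f i)
          end).
  destruct H; assumption.
Qed.

Section TreeSimulation.
Variables (T1 T2 : Type) (ch1 : T1 -> T1 -> Prop) (ch2 : T2 -> T2 -> Prop).
Variable R : T1 -> T2 -> Prop.

Lemma ord_le_tree_sim :
  (forall s1 s2, R s1 s2 -> forall t1, ch1 s1 t1 ->
     exists t2, ch2 s2 t2 /\ R t1 t2) ->
  forall a s1 s2, R s1 s2 -> ord_le_tree a ch1 s1 -> ord_le_tree a ch2 s2.
Proof.
  intros Hsim a; induction a as [J f IH]; intros s1 s2 HR H i; simpl in *.
  destruct (H i) as [t1 [Ht1 Hle]].
  destruct (Hsim _ _ HR _ Ht1) as [t2 [Ht2 HR']].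
  exists t2; split; [exact Ht2 | exact (IH i _ _ HR' Hle)].
Qed.

Lemma tree_le_ord_sim :
  (forall s1 s2, R s1 s2 -> forall t2, ch2 s2 t2 ->
     exists t1, ch1 s1 t1 /\ R t1 t2) ->
  forall s1 a, tree_le_ord ch1 s1 a -> forall s2, R s1 s2 -> tree_le_ord ch2 s2 a.
Proof.
  intros Hsim s1 a; revert s1; induction a as [J f IH]; intros s1 H s2 HR.
  constructor; intros t2 Ht2.
  destruct (Hsim _ _ HR _ Ht2) as [t1 [Ht1 HR']].
  destruct (tree_le_ord_Node_inv _ _ _ _ H _ Ht1) as [i Hi].
  exists i; exact (IH i _ Hi _ HR').
Qed.

End TreeSimulation.

Lemma width_osucc_child {A : Type} (le : A -> A -> Prop) g :
  width_is le (osucc g) ->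
  exists x, tree_le_ord (child le) [x] g /\ ord_le_tree g (child le) [x].
Proof.
  intros [Hup Hlow].
  destruct (Hlow tt) as [t [[x [Ht _]] Hx]]; simpl in Ht; subst t.
  exists x; split; [| exact Hx].
  destruct (tree_le_ord_Node_inv _ _ _ _ Hup [x]) as [[] Hi]; [| exact Hi].
  exists x; split; [reflexivity | constructor].
Qed.

Definition sig_le {A : Type} (le : A -> A -> Prop) (P : A -> Prop)
  (a b : {y | P y}) : Prop := le (proj1_sig a) (proj1_sig b).

Lemma wqo_sig {A : Type} (le : A -> A -> Prop) (P : A -> Prop) :
  wqo le -> wqo (sig_le le P).
Proof.
  intros [[Hrefl Htrans] Hgood]; split; [split |].
  - intro a; apply Hrefl.
  - intros a b c; apply Htrans.
  - intro f; exact (Hgood (fun i => proj1_sig (f i))).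
Qed.

Lemma incomp_sym {A : Type} (le : A -> A -> Prop) x y :
  incomp le x y -> incomp le y x.
Proof. unfold incomp; tauto. Qed.

Section IncomparableSuborder.
Variables (A : Type) (le : A -> A -> Prop) (x : A).

Let Ax := {y : A | incomp le x y}.
Let leAx := sig_le le (incomp le x).

Let below_x (s : list A) (s' : list Ax) : Prop :=
  s = x :: map (@proj1_sig _ _) s'.

Lemma Forall_incomp_sig (z : Ax) s' :
  Forall (incomp leAx z) s' <->
  Forall (incomp le (proj1_sig z)) (map (@proj1_sig _ _) s').
Proof.
  induction s' as [|a s' IH]; simpl; split; intro H; constructor;
    inversion H; subst; try assumption; apply IH; assumption.
Qed.

Lemma child_below_x_fwd s s' :
  below_x s s' -> forall t, child le s t ->
  exists t', child leAx s' t' /\ below_x t t'.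
Proof.
  intros Hs t [z [Ht Hz]]; unfold below_x in Hs; subst s t.
  inversion Hz as [|? ? Hxz Hrest]; subst.
  set (z' := exist _ z (incomp_sym _ _ _ Hxz) : Ax).
  exists (s' ++ [z']); split.
  - exists z'; split; [reflexivity | apply Forall_incomp_sig; exact Hrest].
  - unfold below_x; rewrite map_app; reflexivity.
Qed.

Lemma child_below_x_bwd s s' :
  below_x s s' -> forall t', child leAx s' t' ->
  exists t, child le s t /\ below_x t t'.
Proof.
  intros Hs t' [z [Ht Hz]]; unfold below_x in Hs; subst s t'.
  exists ((x :: map (@proj1_sig _ _) s') ++ [proj1_sig z]); split.
  - exists (proj1_sig z); split; [reflexivity |].
    constructor; [exact (incomp_sym _ _ _ (proj2_sig z)) |].
    apply Forall_incomp_sig; exact Hz.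
  - unfold below_x; rewrite map_app; reflexivity.
Qed.

Lemma width_incomp_sig g :
  tree_le_ord (child le) [x] g -> ord_le_tree g (child le) [x] ->
  width_is leAx g.
Proof.
  intros Hup Hlow; split.
  - exact (tree_le_ord_sim _ _ _ _ _ child_below_x_bwd [x] g Hup [] eq_refl).
  - exact (ord_le_tree_sim _ _ _ _ _ child_below_x_fwd g [x] [] eq_refl Hlow).
Qed.

End IncomparableSuborder.

Lemma width_osucc_split {A : Type} (le : A -> A -> Prop) g :
  width_is le (osucc g) -> exists x, width_is (sig_le le (incomp le x)) g.
Proof.
  intro Hw; destruct (width_osucc_child le g Hw) as [x [Hup Hlow]].
  exists x; exact (width_incomp_sig A le x g Hup Hlow).
Qed.

Definition embedding {X Y : Type} (leX : X -> X -> Prop) (leY : Y -> Y -> Prop)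
  (e : X -> Y) : Prop :=
  (forall u v, e u = e v -> u = v) /\ (forall u v, leX u v <-> leY (e u) (e v)).

Lemma embedding_comp {X Y Z : Type} (leX : X -> X -> Prop) (leY : Y -> Y -> Prop)
  (leZ : Z -> Z -> Prop) (f : X -> Y) (g : Y -> Z) :
  embedding leX leY f -> embedding leY leZ g ->
  embedding leX leZ (fun u => g (f u)).
Proof.
  intros [Hfi Hfo] [Hgi Hgo]; split.
  - intros u v H; exact (Hfi _ _ (Hgi _ _ H)).
  - intros u v; rewrite Hfo; apply Hgo.
Qed.

(* The order of X ⊔ Γ_1, with None the added point. *)
Definition option_le {X : Type} (le : X -> X -> Prop) (u v : option X) : Prop :=
  match u, v with
  | Some a, Some b => le a b
  | None, None => True
  | _, _ => False
  end.

Lemma option_incomp_embedding {A X : Type} (le : A -> A -> Prop)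
  (leX : X -> X -> Prop) (x : A) (e : X -> {y | incomp le x y}) :
  (forall a, le a a) -> embedding leX (sig_le le (incomp le x)) e ->
  embedding (option_le leX) le
    (fun u => match u with None => x | Some a => proj1_sig (e a) end).
Proof.
  intros Hrefl [Hinj Hord].
  assert (Hval_inj : forall a b, proj1_sig (e a) = proj1_sig (e b) -> a = b).
  { intros a b H; apply Hinj.
    destruct (e a), (e b); simpl in H; subst; f_equal; apply proof_irrelevance. }
  assert (Hne : forall a, proj1_sig (e a) <> x).
  { intros a H; apply (proj1 (proj2_sig (e a))); rewrite H; apply Hrefl. }
  split.
  - intros [a|] [b|]; simpl; intro H.
    + f_equal; exact (Hval_inj _ _ H).
    + exfalso; exact (Hne a H).
    + exfalso; exact (Hne b (eq_sym H)).
    + reflexivity.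
  - intros [a|] [b|]; simpl.
    + apply Hord.
    + split; [contradiction | exact (proj2 (proj2_sig (e a)))].
    + split; [contradiction | exact (proj1 (proj2_sig (e b)))].
    + split; intros _; [apply Hrefl | exact I].
Qed.

(* Γ_(n+1) = Γ_n plus the new point F1. *)
Definition sum_fin_pred {B : Type} {n : nat} (z : B + Fin.t (S n)) :
  option (B + Fin.t n) :=
  match z with
  | inl b => Some (inl b)
  | inr i => Fin.caseS' i (fun _ => option (B + Fin.t n)) None
               (fun j => Some (inr j))
  end.

Lemma sum_fin_pred_embedding {B : Type} (leB : B -> B -> Prop) n :
  embedding (sum_le leB (S n)) (option_le (sum_le leB n)) sum_fin_pred.
Proof.
  split.
  - intros [a|i] [b|j]; simpl.
    + congruence.
    + pattern j; apply Fin.caseS'; simpl; discriminate.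
    + pattern i; apply Fin.caseS'; simpl; discriminate.
    + pattern i; apply Fin.caseS'; pattern j; apply Fin.caseS'; simpl;
        congruence.
  - intros [a|i] [b|j]; simpl.
    + reflexivity.
    + pattern j; apply Fin.caseS'; simpl; tauto.
    + pattern i; apply Fin.caseS'; simpl; tauto.
    + pattern i; apply Fin.caseS'; pattern j; apply Fin.caseS'; simpl.
      * tauto.
      * split; [discriminate | contradiction].
      * split; [discriminate | contradiction].
      * intros q p; split; [apply Fin.FS_inj | intros ->; reflexivity].
Qed.

Lemma sum_fin0_embedding {B : Type} (leB : B -> B -> Prop) :
  embedding (sum_le leB 0) leB
    (fun z => match z with inl b => b | inr i => Fin.case0 (fun _ => B) i end).
Proof.
  split; intros [a|i] [b|j]; simpl;
    solve [congruence | tauto | apply Fin.case0; assumption].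
Qed.

Theorem mainTheorem6 (A : Type) (leA : A -> A -> Prop) (alpha : ord) (n : nat) :
  wqo leA -> width_is leA (oadd_nat alpha n) ->
  exists (B : Type) (leB : B -> B -> Prop),
    wqo leB /\ width_is leB alpha /\
    exists e : B + Fin.t n -> A,
      (forall x y, e x = e y -> x = y) /\
      (forall x y, sum_le leB n x y <-> leA (e x) (e y)).
Proof.
  revert A leA; induction n as [|n IHn]; intros A leA HA Hw.
  - exists A, leA; split; [exact HA | split; [exact Hw |]].
    eexists; exact (sum_fin0_embedding leA).
  - destruct (width_osucc_split leA _ Hw) as [x Hwx].
    destruct (IHn _ _ (wqo_sig leA _ HA) Hwx)
      as [B [leB [HB [HBw [e He]]]]].
    exists B, leB; split; [exact HB | split; [exact HBw |]].
    eexists; exact (embedding_comp _ _ _ _ _ (sum_fin_pred_embedding leB n)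
                      (option_incomp_embedding leA _ x e (proj1 (proj1 HA)) He)).
Qed.
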